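(* Let $G=(V,E)$ be a connected graph, $\tau$ a set of types, $f:\tau\to\mathbb{Q}_{\ge1}$ a fitness function, and $\alpha\in\tau$. Let $\beta=\arg\max\{f(j): j\in\tau\setminus\{\alpha\}\}$ and $\tau'=\{\alpha,\beta\}$. Let $\Omega$ (resp. $\Omega'$) be the set of functions $V\to\tau$ (resp. $V\to\tau'$), and define $g:\Omega\to\Omega'$ by $g(S)(v)=\alpha$ if $S(v)=\alpha$ and $g(S)(v)=\beta$ otherwise. Then for every $M_0\in\Omega$, $\pi_\alpha(G,\tau,f,M_0)\ge\pi_\alpha(G,\tau',f,g(M_0))$ (where on the right $f$ is restricted to $\tau'$).
   Context: For $G=(V,E)$, $N(v)$ is the neighbourhood of $v$. For a state $S:V\to\tau$ and $v,w\in V$, $S|_{v\to w}$ equals $S$ except $w$ gets type $S(v)$. The Moran process $M(G,\tau,f,M_0)$ is the Markov chain on states $V\to\tau$ started at $M_0$ in which, given $M_t$, a vertex $v$ is chosen with probability $f(M_t(v))/\sum_{u\in V}f(M_t(u))$, then $w\in N(v)$ uniformly at random, and $M_{t+1}=M_t|_{v\to w}$. $\pi_j(G,\tau,f,M_0)$ is the probability that at some time every vertex has type $j$. *)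

From HB Require Import structures.
From mathcomp Require Import all_boot all_order all_algebra.
From mathcomp Require Import classical_sets reals.
Set Implicit Arguments. Unset Strict Implicit. Unset Printing Implicit Defensive.
Import Order.TTheory GRing.Theory Num.Theory.
Local Open Scope ring_scope.

Definition connected_graph (V : finType) (e : rel V) : Prop :=
  symmetric e /\ irreflexive e /\ (forall u v : V, connect e u v).

Definition nbhd (V : finType) (e : rel V) (v : V) : {set V} := [set w | e v w].

Definition upd (V τ : finType) (S : {ffun V -> τ}) (v w : V) : {ffun V -> τ} :=
  [ffun u => if u == w then S v else S u].

Definition mono (V τ : finType) (S : {ffun V -> τ}) (j : τ) : bool :=
  [forall u, S u == j].

Definition total_fit (R : realType) (V τ : finType) (f : τ -> rat)
  (S : {ffun V -> τ}) : R := \sum_(u : V) ratr (f (S u)).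

(* hit R e f j t S = probability that the Moran process M(G,τ,f,S)
   has, at some time s <= t, every vertex of type j. *)
Fixpoint hit (R : realType) (V τ : finType) (e : rel V) (f : τ -> rat)
  (j : τ) (t : nat) (S : {ffun V -> τ}) : R :=
  if mono S j then 1 else
  match t with
  | 0 => 0
  | t'.+1 =>
      \sum_(v : V) (ratr (f (S v)) / total_fit R f S) *
        \sum_(w in nbhd e v) (#|nbhd e v|%:R)^-1 * hit R e f j t' (upd S v w)
  end.

(* pi_j(G,τ,f,M0): probability that at some time every vertex has type j
   (the increasing limit, i.e. supremum, of the hitting-by-time-t probabilities). *)
Definition fixprob (R : realType) (V τ : finType) (e : rel V) (f : τ -> rat)
  (j : τ) (M0 : {ffun V -> τ}) : R :=
  sup (range (fun t : nat => hit R e f j t M0)).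

Definition pair_type (τ : finType) (a b : τ) : finType :=
  {x : τ | (x == a) || (x == b)}.

Lemma pair_a_proof (τ : finType) (a b : τ) : (a == a) || (a == b).
Proof. by rewrite eqxx. Qed.
Lemma pair_b_proof (τ : finType) (a b : τ) : (b == a) || (b == b).
Proof. by rewrite eqxx orbT. Qed.

Definition pair_a (τ : finType) (a b : τ) : pair_type a b :=
  exist _ a (pair_a_proof a b).
Definition pair_b (τ : finType) (a b : τ) : pair_type a b :=
  exist _ b (pair_b_proof a b).

Definition restr_fit (τ : finType) (a b : τ) (f : τ -> rat) : pair_type a b -> rat :=
  fun x => f (val x).

Definition gproj (V τ : finType) (a b : τ) (S : {ffun V -> τ}) :
  {ffun V -> pair_type a b} :=
  [ffun v => if S v == a then pair_a a b else pair_b a b].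

From mathcomp Require Import all_boot all_order all_algebra.
From mathcomp Require Import classical_sets reals.
Set Implicit Arguments. Unset Strict Implicit. Unset Printing Implicit Defensive.
Import Order.TTheory GRing.Theory Num.Theory.
Local Open Scope ring_scope.

(* Let U S be the fixation probability of α in the many-type process and, for a
   two-type state T, let min_fix T be the least U S over the states S carrying α
   wherever T does.  U is superharmonic for the Moran step, and comparing the
   step from T with the step from a minimising S vertex by vertex shows that
   min_fix is superharmonic for the two-type process: an α-vertex of T is an
   α-vertex of S, and a reproducing β-vertex of T never raises min_fix, while it
   reproduces at least as fast as the corresponding vertex of S whenever that
   one is not of type α, β having the largest fitness among the types other
   than α.  As min_fix is 1 on the all-α states, it dominates the two-type
   fixation probability, and min_fix (g M0) <= U M0. *)

Section MoranStep.
Variables (R : realType) (V τ : finType) (e : rel V) (f : τ -> rat).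
Hypothesis f_ge0 : forall x, 0 <= f x.

Definition nbr_mean (v : V) (g : V -> R) : R :=
  \sum_(w in nbhd e v) (#|nbhd e v|%:R)^-1 * g w.

Definition moran_step (S : {ffun V -> τ}) (h : {ffun V -> τ} -> R) : R :=
  \sum_v ratr (f (S v)) / total_fit R f S * nbr_mean v (fun w => h (upd S v w)).

Lemma ler_nbr_mean v (g1 g2 : V -> R) :
  (forall w, g1 w <= g2 w) -> nbr_mean v g1 <= nbr_mean v g2.
Proof.
by move=> le_g; apply: ler_sum => w _; rewrite ler_wpM2l ?invr_ge0.
Qed.

Lemma nbr_mean_cst v (c : R) :
  nbr_mean v (fun=> c) = if nbhd e v == finset.set0 then 0 else c.
Proof.
rewrite /nbr_mean sumr_const -cards_eq0.
have [->|n0] := eqVneq #|nbhd e v| 0%N; first by rewrite mulr0n.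
by rewrite -mulrnAl -(mulr_natr _ #|_|) mulVf ?mul1r ?pnatr_eq0.
Qed.

Lemma nbr_mean_set0 v (g : V -> R) : nbhd e v = finset.set0 -> nbr_mean v g = 0.
Proof. by move=> Nv; rewrite /nbr_mean Nv big_set0. Qed.

Lemma nbr_meanD v (g1 g2 : V -> R) :
  nbr_mean v (fun w => g1 w + g2 w) = nbr_mean v g1 + nbr_mean v g2.
Proof. by rewrite -big_split; apply: eq_bigr => w _; rewrite mulrDr. Qed.

Lemma fitness_weight_ge0 (S : {ffun V -> τ}) v :
  0 <= ratr (f (S v)) / total_fit R f S.
Proof. by rewrite divr_ge0 ?sumr_ge0 // => *; rewrite ler0q. Qed.

Lemma sum_fitness_weight_le1 (S : {ffun V -> τ}) :
  \sum_v ratr (f (S v)) / total_fit R f S <= 1.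
Proof.
rewrite -mulr_suml -/(total_fit R f S).
by have [->|F0] := eqVneq (total_fit R f S) 0; rewrite ?invr0 ?mulr0 ?divff.
Qed.

Lemma ler_moran_step S (h1 h2 : {ffun V -> τ} -> R) :
  (forall S', h1 S' <= h2 S') -> moran_step S h1 <= moran_step S h2.
Proof.
move=> le_h; apply: ler_sum => v _.
by rewrite ler_wpM2l ?fitness_weight_ge0 ?ler_nbr_mean.
Qed.

Lemma moran_step_cst S (c : R) : 0 <= c -> moran_step S (fun=> c) <= c.
Proof.
move=> c0; apply: le_trans (_ : \sum_v ratr (f (S v)) / total_fit R f S * c <= c).
  apply: ler_sum => v _; rewrite ler_wpM2l ?fitness_weight_ge0 // nbr_mean_cst.
  by case: ifP.
by rewrite -mulr_suml ler_piMl ?sum_fitness_weight_le1.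
Qed.

Lemma moran_step_ge0 S (h : {ffun V -> τ} -> R) :
  (forall S', 0 <= h S') -> 0 <= moran_step S h.
Proof.
move=> h0; apply: le_trans (ler_moran_step S h0).
by rewrite /moran_step big1 // => v _; rewrite nbr_mean_cst; case: ifP; rewrite mulr0.
Qed.

Lemma moran_stepD S (h1 h2 : {ffun V -> τ} -> R) :
  moran_step S (fun S' => h1 S' + h2 S') = moran_step S h1 + moran_step S h2.
Proof. by rewrite -big_split; apply: eq_bigr => v _; rewrite nbr_meanD mulrDr. Qed.

Lemma moran_step_leP S (h : {ffun V -> τ} -> R) (u : R) :
  0 < total_fit R f S ->
  (moran_step S h <= u) =
  (\sum_v ratr (f (S v)) * (nbr_mean v (fun w => h (upd S v w)) - u) <= 0).
Proof.
move=> F0; rewrite /moran_step.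
under eq_bigr do rewrite mulrAC.
rewrite -mulr_suml ler_pdivrMr // -subr_le0.
under [in RHS]eq_bigr do rewrite mulrBr.
by rewrite sumrB -mulr_suml mulrC.
Qed.

End MoranStep.

Section Hitting.
Variables (R : realType) (V τ : finType) (e : rel V) (f : τ -> rat) (j : τ).
Hypothesis f_ge0 : forall x, 0 <= f x.

Local Notation hit := (hit R e f j).
Local Notation fixprob := (fixprob R e f j).
Local Notation moran_step := (moran_step e f).

Lemma hitS t S : hit t.+1 S = if mono S j then 1 else moran_step S (hit t).
Proof. by []. Qed.

Lemma hit_ge0 t S : 0 <= hit t S.
Proof.
elim: t S => [|t IH] S; first by rewrite /=; case: ifP.
by rewrite hitS; case: ifP => // _; apply: (moran_step_ge0 e f_ge0).
Qed.

Lemma hit_le1 t S : hit t S <= 1.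
Proof.
elim: t S => [|t IH] S; first by rewrite /=; case: ifP.
rewrite hitS; case: ifP => // _.
by apply: le_trans (moran_step_cst e f_ge0 S ler01); apply: (ler_moran_step e f_ge0).
Qed.

Lemma hit_homo S : {homo hit^~ S : t t' / (t <= t')%N >-> t <= t'}.
Proof.
apply: homo_leq => [//|y x z|t]; first exact: le_trans.
elim: t S => [|t IH] S; rewrite !hitS; case: ifP => m; rewrite ?hit_le1 //.
  by rewrite [hit 0 S]/= m; apply: (moran_step_ge0 e f_ge0) => S'; apply: hit_ge0.
exact: (ler_moran_step e f_ge0).
Qed.

Lemma has_sup_hit S : has_sup (range (hit^~ S)).
Proof.
split; first by exists (hit 0 S), 0%N.
by exists 1 => _ [t _ <-]; apply: hit_le1.
Qed.

Lemma hit_le_fixprob t S : hit t S <= fixprob S.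
Proof. by apply: sup_upper_bound (has_sup_hit S) _ _; exists t. Qed.

Lemma fixprob_ge0 S : 0 <= fixprob S.
Proof. exact: le_trans (hit_ge0 0 S) (hit_le_fixprob 0 S). Qed.

Lemma fixprob_le_superharmonic (h : {ffun V -> τ} -> R) :
  (forall S, 0 <= h S) -> (forall S, mono S j -> 1 <= h S) ->
  (forall S, ~~ mono S j -> moran_step S h <= h S) ->
  forall S, fixprob S <= h S.
Proof.
move=> h0 h_mono h_super S.
have hit_le t : forall S, hit t S <= h S.
  elim: t => [|t IH] S'; rewrite ?hitS /=; case: ifP => [/h_mono //|m] //.
  by apply: le_trans (h_super _ (negbT m)); apply: (ler_moran_step e f_ge0).
apply: ge_sup; first by exists (hit 0 S), 0%N.
by move=> _ [t _ <-].
Qed.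

Lemma fixprob_le1 S : fixprob S <= 1.
Proof.
by apply: (fixprob_le_superharmonic (h := fun=> 1)) => // S' _; apply: moran_step_cst.
Qed.

Lemma fixprob_mono S : mono S j -> fixprob S = 1.
Proof.
move=> m; apply/eqP; rewrite eq_le fixprob_le1.
by have := hit_le_fixprob 0 S; rewrite /= m.
Qed.

Lemma fixprob_approx (eps : R) : 0 < eps ->
  exists t, forall S, fixprob S - eps <= hit t S.
Proof.
move=> eps0.
suff [t ht] : exists t, forall S, S \in enum {ffun V -> τ} -> fixprob S - eps <= hit t S.
  by exists t => S; apply: ht; rewrite mem_enum.
elim: (enum _) => [|S0 s [t ht]]; first by exists 0%N.
have [_ [t0 _ <-] /ltW lt0] := sup_adherent eps0 (has_sup_hit S0).
exists (maxn t t0) => S; rewrite inE => /predU1P [->|Ss].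
  by apply: le_trans lt0 (hit_homo _ (leq_maxr _ _)).
by apply: le_trans (ht S Ss) (hit_homo _ (leq_maxl _ _)).
Qed.

Lemma moran_step_fixprob S : moran_step S fixprob <= fixprob S.
Proof.
have [m|m] := boolP (mono S j).
  rewrite fixprob_mono //; apply: le_trans (moran_step_cst e f_ge0 S ler01).
  by apply: (ler_moran_step e f_ge0) => S'; apply: fixprob_le1.
apply/ler_addgt0Pr => eps eps0.
have [t ht] := fixprob_approx eps0.
apply: (@le_trans _ _ (hit t.+1 S + eps)); last by rewrite lerD2r hit_le_fixprob.
rewrite hitS (negbTE m).
apply: le_trans (_ : moran_step S (fun S' => hit t S' + eps) <= _).
  by apply: (ler_moran_step e f_ge0) => S'; rewrite -lerBlDr.
by rewrite moran_stepD lerD2l moran_step_cst ?ltW.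
Qed.

End Hitting.

Lemma connected_nbhd_set0 (V : finType) (e : rel V) (v : V) :
  connected_graph e -> nbhd e v = finset.set0 -> forall u, u = v.
Proof.
move=> [_ [_ conn]] Nv u; have /connectP [[|w p] //= /andP [evw _] _] := conn v u.
have : w \in nbhd e v by rewrite inE.
by rewrite Nv inE.
Qed.

Lemma total_fit_gt0 (R : realType) (V τ : finType) (f : τ -> rat)
    (S : {ffun V -> τ}) (v : V) :
  (forall x, 0 < f x) -> 0 < total_fit R f S.
Proof.
move=> f_gt0; rewrite /total_fit (bigD1 v) //= ltr_pwDl ?ltr0q //.
by apply: sumr_ge0 => u _; rewrite ler0q ltW.
Qed.

Section Dominance.
Variables (R : realType) (V : finType) (e : rel V).
Variables (τ : finType) (f : τ -> rat) (α β : τ).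
Hypotheses (conn : connected_graph e) (f_ge1 : forall j, 1 <= f j)
  (f_β_max : forall j, j != α -> f j <= f β).

Local Notation τ' := (pair_type α β).
Local Notation U := (fixprob R e f α).
Implicit Types (T : {ffun V -> τ'}) (S : {ffun V -> τ}).

Let f_gt0 j : 0 < f j. Proof. exact: lt_le_trans (f_ge1 j). Qed.
Let f_ge0 j : 0 <= f j. Proof. exact: ltW. Qed.

Definition alpha_sub (T : {ffun V -> τ'}) (S : {ffun V -> τ}) : bool :=
  [forall v, (val (T v) == α) ==> (S v == α)].

Lemma alpha_subP T S : reflect (forall v, val (T v) = α -> S v = α) (alpha_sub T S).
Proof.
apply: (iffP forallP) => [sub v /eqP Tv | sub v]; first exact/eqP/(implyP (sub v)).
by apply/implyP => /eqP /sub ->.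
Qed.

Lemma alpha_sub_upd T S v w : alpha_sub T S -> alpha_sub (upd T v w) (upd S v w).
Proof.
by move/alpha_subP=> sub; apply/alpha_subP => u; rewrite !ffunE; case: ifP => _; apply: sub.
Qed.

Lemma alpha_sub_updl T S v w : val (T v) != α -> alpha_sub T S -> alpha_sub (upd T v w) S.
Proof.
move=> Tv /alpha_subP sub; apply/alpha_subP => u; rewrite ffunE.
by case: ifP => [_ /eqP|_ /sub]; rewrite ?(negbTE Tv).
Qed.

Lemma alpha_sub_updr T S v w : S v = α -> alpha_sub T S -> alpha_sub T (upd S v w).
Proof.
move=> Sv /alpha_subP sub; apply/alpha_subP => u; rewrite ffunE.
by case: ifP => // _; apply: sub.
Qed.

Lemma alpha_sub_cst T : alpha_sub T [ffun=> α].
Proof. by apply/alpha_subP => v; rewrite ffunE. Qed.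

Definition min_fix (T : {ffun V -> τ'}) : R :=
  U [arg min_(S < [ffun=> α] | alpha_sub T S) U S]%O.

Lemma min_fix_le T S : alpha_sub T S -> min_fix T <= U S.
Proof.
by rewrite /min_fix; case: (arg_minP U (alpha_sub_cst T)) => S0 _; apply.
Qed.

Lemma min_fix_ge0 T : 0 <= min_fix T.
Proof. exact: fixprob_ge0. Qed.

Lemma min_fix_attained T : exists2 S, alpha_sub T S & min_fix T = U S.
Proof.
by rewrite /min_fix; case: (arg_minP U (alpha_sub_cst T)) => S0 TS0 _; exists S0.
Qed.

Lemma min_fix_gain T S v :
  alpha_sub T S -> min_fix T = U S -> nbhd e v != finset.set0 ->
  ratr (restr_fit f (T v)) * (nbr_mean e v (fun w => min_fix (upd T v w)) - U S)
  <= ratr (f (S v)) * (nbr_mean e v (fun w => U (upd S v w)) - U S).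
Proof.
move=> TS TS_min Nv; set mT := nbr_mean _ _ _; set mS := nbr_mean _ _ _; set u := U S.
have mean_u : nbr_mean e v (fun=> u) = u by rewrite nbr_mean_cst (negbTE Nv).
have fS_ge0 : 0 <= ratr (f (S v)) :> R by rewrite ler0q.
have mT_le_mS : mT <= mS.
  by apply: ler_nbr_mean => w; apply/min_fix_le/alpha_sub_upd.
have [Tα | Tnα] := eqVneq (val (T v)) α.
  by rewrite /restr_fit Tα -(alpha_subP _ _ TS v Tα) ler_wpM2l ?lerD2r.
have mT_le_u : mT <= u.
  rewrite -mean_u; apply: ler_nbr_mean => w.
  by apply: min_fix_le; apply: alpha_sub_updl.
have [Sα | Snα] := eqVneq (S v) α.
  have u_le_mS : u <= mS.
    rewrite -mean_u; apply: ler_nbr_mean => w.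
    by rewrite /u -TS_min; apply: min_fix_le; apply: alpha_sub_updr.
  apply: (@le_trans _ _ 0); first by rewrite mulr_ge0_le0 ?ler0q ?subr_le0 ?f_ge0.
  by rewrite mulr_ge0 ?subr_ge0.
have Tβ : val (T v) = β.
  by case/orP: (valP (T v)) => /eqP // Tα; rewrite Tα eqxx in Tnα.
apply: le_trans (_ : ratr (f (S v)) * (mT - u) <= _); last by rewrite ler_wpM2l ?lerD2r.
by apply: ler_wnM2r; rewrite ?subr_le0 // ler_rat /restr_fit Tβ f_β_max.
Qed.

Lemma moran_step_min_fix T :
  ~~ mono T (pair_a α β) -> moran_step e (restr_fit f) T min_fix <= min_fix T.
Proof.
move=> /forallPn [v0 _].
have [S TS TS_min] := min_fix_attained T.
have [Nv | /forallPn [v1 /negPn /eqP Nv1]] := boolP [forall v, nbhd e v != finset.set0].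
  have U_super :
      \sum_v ratr (f (S v)) * (nbr_mean e v (fun w => U (upd S v w)) - U S) <= 0.
    by rewrite -moran_step_leP ?(total_fit_gt0 _ _ v0) ?moran_step_fixprob.
  rewrite moran_step_leP; last by apply: total_fit_gt0 v0 _ => x; apply: f_gt0.
  apply: le_trans U_super; rewrite TS_min.
  by apply: ler_sum => v _; apply: min_fix_gain => //; apply: (forallP Nv).
(* A vertex without neighbours is the only vertex, and then no step moves. *)
rewrite /moran_step big1 ?min_fix_ge0 // => v _.
by rewrite (connected_nbhd_set0 conn Nv1 v) nbr_mean_set0 ?mulr0.
Qed.

Lemma min_fix_mono T : mono T (pair_a α β) -> 1 <= min_fix T.
Proof.
move=> /forallP T_α; have [S /alpha_subP TS ->] := min_fix_attained T.
rewrite fixprob_mono //; apply/forallP => v; apply/eqP/TS.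
by rewrite (eqP (T_α v)).
Qed.

Lemma alpha_sub_gproj S : β != α -> alpha_sub (gproj α β S) S.
Proof.
move=> βα; apply/alpha_subP => v; rewrite ffunE.
by case: eqP => // _ /eqP; rewrite (negbTE βα).
Qed.

End Dominance.

Theorem corollary7 (R : realType) (V : finType) (e : rel V)
  (τ : finType) (f : τ -> rat) (α β : τ) :
  connected_graph e ->
  (forall j : τ, 1 <= f j) ->
  β != α ->
  (forall j : τ, j != α -> f j <= f β) ->
  forall M0 : {ffun V -> τ},
    fixprob R e (restr_fit f) (pair_a α β) (gproj α β M0)
    <= fixprob R e f α M0.
Proof.
move=> conn f_ge1 βα f_β_max M0.
apply: (@le_trans _ _ (min_fix R e f (gproj α β M0))); last first.
  exact/min_fix_le/alpha_sub_gproj.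
apply: fixprob_le_superharmonic => [x|T|T|T].
- exact: le_trans (f_ge1 _).
- exact: min_fix_ge0.
- exact: min_fix_mono.
- exact: moran_step_min_fix.
Qed.
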